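(* Consider NSGA-III (as defined in the context) on an arbitrary $m$-objective function $f:\{0,1\}^n\to\mathbb N_0^m$ with $\varepsilon_{\mathrm{nad}}\ge f_{\max}$, reference set $\mathcal R_p$ with $p\ge 2m^{3/2}f_{\max}$, and population size $\mu\ge|S|$, where $S$ is a maximum-cardinality set of mutually incomparable solutions of $f$ (any initial population, any rule for choosing extreme points). Then in every generation $t$, for every $x\in F^1_t$ there is $x'\in P_{t+1}$ with $f(x')=f(x)$.
   Context: Let $f=(f_1,\dots,f_m):\{0,1\}^n\to\mathbb N_0^m$ be an $m$-objective function to be maximized, and $f_{\max}:=\max\{f_j(x): x\in\{0,1\}^n, j\in[m]\}$, assumed $\ge 1$. For $x,y\in\{0,1\}^n$: $x\succeq y$ ($x$ weakly dominates $y$) iff $f_j(x)\ge f_j(y)$ for all $j$; $x\succ y$ iff $x\succeq y$ and $f_j(x)>f_j(y)$ for some $j$; $x,y$ are incomparable if neither $x\succeq y$ nor $y\succeq x$. A set $S\subseteq\{0,1\}^n$ is a set of mutually incomparable solutions if any two distinct elements are incomparable. For $p\in\mathbb N$ the reference set is $\mathcal R_p=\{(a_1/p,\dots,a_m/p): (a_1,\dots,a_m)\in\mathbb N_0^m,\ \sum_i a_i=p\}$. NSGA-III with population size $\mu$, threshold $\varepsilon_{\mathrm{nad}}>0$ and reference set $\mathcal R_p$: start with a population $P_0$ (a multiset of $\mu$ bit strings; arbitrary), $E_0=\{(-\infty,\dots,-\infty)\}$, $y^{\max}=(-\infty,\dots,-\infty)$, $y^{\min}=(+\infty,\dots,+\infty)$.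 In generation $t=0,1,2,\dots$: (1) Offspring: $Q_t$ consists of $\mu$ offspring, each created independently by choosing a parent uniformly at random from $P_t$ and flipping each of its bits independently with probability $1/n$. (2) Sorting: $R_t=P_t\cup Q_t$ (multiset of size $2\mu$) is partitioned into layers $F^1_t,\dots,F^k_t$, where $F^1_t$ consists of the members of $R_t$ not dominated (w.r.t. $\succ$) by any member of $R_t$, and $F^i_t$ consists of the members of $R_t\setminus(F^1_t\cup\dots\cup F^{i-1}_t)$ not dominated by any member of that set. Let $i^*$ be the index with $\sum_{i<i^*}|F^i_t|<\mu\le\sum_{i\le i^*}|F^i_t|$, and $Y_t=\bigcup_{i<i^*}F^i_t$. (3) Normalization: for each $j$, set $y^{\min}_j\leftarrow\min(y^{\min}_j,\min_{x\in R_t}f_j(x))$ and $y^{\max}_j\leftarrow\max(y^{\max}_j,\max_{x\in F^1_t}f_j(x))$ (so these are running extremes over all generations so far), and choose an extreme point $e^{(j)}\in f(Y_t\cup F^{i^*}_t)\cup E_t$ by some fixed rule (originally via an achievement scalarization function); set $E_{t+1}=\{e^{(1)},\dots,e^{(m)}\}$. If $e^{(1)},\dots,e^{(m)}$ are linearly independent, let $H$ be the affine hyperplane through them; if for every $j$ the hyperplane $H$ meets the $j$-th coordinate axis in exactly one point $I_j u_j$ ($u_j$ the $j$-th unit vector) with $\varepsilon_{\mathrm{nad}}\le I_j\le y^{\max}_j$, set $y^{\mathrm{nad}}_j=I_j$ for all $j$. Otherwise (including linear dependence) set $y^{\mathrm{nad}}_j=\max_{x\in F^1_t}f_j(x)$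 for all $j$. Afterwards, for every $j$ with $y^{\mathrm{nad}}_j<y^{\min}_j+\varepsilon_{\mathrm{nad}}$, reset $y^{\mathrm{nad}}_j=\max_{x\in R_t}f_j(x)$. The normalized objectives are $f^n_j(x)=(f_j(x)-y^{\min}_j)/(y^{\mathrm{nad}}_j-y^{\min}_j)$ (with the convention $f^n_j(x):=0$ if the denominator is $0$), $f^n=(f^n_1,\dots,f^n_m)$. (4) Association: each $x\in Y_t\cup F^{i^*}_t$ is associated with a reference point $\mathrm{rp}(x)\in\mathcal R_p$ minimizing the Euclidean distance from $f^n(x)$ to the line $\{\lambda r:\lambda\in\mathbb R\}$ (equivalently, minimizing the angle between $f^n(x)$ and $r$); ties are broken by a deterministic rule depending only on $f^n(x)$. (5) Selection: let $\rho_r=|\{x\in Y_t:\mathrm{rp}(x)=r\}|$ for $r\in\mathcal R_p$, $\tilde F=\emptyset$, $R'=\mathcal R_p$. Repeat: choose $r\in R'$ with minimal $\rho_r$ (ties uniformly at random); if some $x\in F^{i^*}_t\setminus\tilde F$ has $\mathrm{rp}(x)=r$, add to $\tilde F$ such an $x$ minimizing the distance between $f^n(x)$ and $r$ (ties uniformly at random), increase $\rho_r$ by one, and stop as soon as $|Y_t|+|\tilde F|=\mu$; otherwise remove $r$ from $R'$. Set $P_{t+1}=Y_t\cup\tilde F$. *)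

From HB Require Import structures.
From mathcomp Require Import all_boot all_order all_algebra.
From mathcomp Require Import reals.
Set Implicit Arguments. Unset Strict Implicit. Unset Printing Implicit Defensive.
Import Order.TTheory GRing.Theory Num.Theory.

Definition bs (n : nat) := {ffun 'I_n -> bool}.

Section Combinatorial.
Variables (n m : nat) (f : bs n -> 'I_m -> nat).

Definition wdom (x y : bs n) : bool := [forall j, f y j <= f x j].
Definition sdom (x y : bs n) : bool := wdom x y && [exists j, f y j < f x j].

Definition incomparable_set (S : {set bs n}) : Prop :=
  forall x y, x \in S -> y \in S -> x != y -> ~~ wdom x y /\ ~~ wdom y x.

Definition fmax : nat := \max_(x : bs n) \max_(j < m) f x j.

(* non-dominated sorting of a multiset given as an indexed family g *)
Variables (N : nat) (g : 'I_N -> bs n).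
Definition front (A : {set 'I_N}) : {set 'I_N} :=
  [set i in A | [forall k in A, ~~ sdom (g k) (g i)]].
Fixpoint remaining (k : nat) : {set 'I_N} :=
  if k is k'.+1 then remaining k' :\: front (remaining k') else setT.
(* layer k = F^{k+1} in the paper's 1-based numbering *)
Definition layer (k : nat) : {set 'I_N} := front (remaining k).
(* union of layers 0..k-1, i.e. F^1 u ... u F^k *)
Definition below (k : nat) : {set 'I_N} := ~: remaining k.
End Combinatorial.

(* R_t = P_t u Q_t as a family indexed by 'I_(mu+mu) *)
Definition Rpop (n mu : nat) (Pt Qt : 'I_mu -> bs n) (i : 'I_(mu + mu)) : bs n :=
  match split i with inl a => Pt a | inr b => Qt b end.

(* reference points: a : 'I_m -> {0..p} with sum p, representing a/p *)
Definition refT (m p : nat) := {ffun 'I_m -> 'I_p.+1}.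
Definition refset (m p : nat) : {set refT m p} :=
  [set a : refT m p | \sum_j (a j : nat) == p].

Section Real.
Variable R : realType.
Local Open Scope ring_scope.
Variables (n m p : nat) (f : bs n -> 'I_m -> nat).

Definition rvec (a : refT m p) : 'rV[R]_m := \row_j ((a j : nat)%:R / p%:R).
Definition norm2 (v : 'rV[R]_m) : R := \sum_j v ord0 j ^+ 2.
Definition closer_line (v r r' : 'rV[R]_m) : Prop :=
  forall l' : R, exists l : R, norm2 (v - l *: r) <= norm2 (v - l' *: r').
(* deterministic association rule depending only on f^n(x) *)
Definition assoc_ok (assoc : 'rV[R]_m -> refT m p) : Prop :=
  forall v, assoc v \in refset m p /\
    forall r', r' \in refset m p -> closer_line v (rvec (assoc v)) (rvec r').

(* hyperplane through extreme points ev 0, ..., ev (m-1) *)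
Definition Emx (ev : 'I_m -> 'I_m -> nat) : 'M[R]_m := \matrix_(i, k) (ev i k)%:R.
Definition onH (ev : 'I_m -> 'I_m -> nat) (y : 'rV[R]_m) : Prop :=
  exists c : 'rV[R]_m, \sum_i c ord0 i = 1 /\ y = c *m Emx ev.
Definition intercept ev (j : 'I_m) (I : R) : Prop := onH ev (I *: delta_mx ord0 j).
Definition good_hyp ev (ymax : 'I_m -> R) (eps : R) : Prop :=
  row_free (Emx ev) /\
  forall j, (exists! I, intercept ev j I) /\ (forall I, intercept ev j I -> eps <= I <= ymax j).

(* extreme points: None encodes the point (-oo,...,-oo) *)
Definition nad_ok (E1 : 'I_m -> option ('I_m -> nat)) (ymin ymax maxF1 maxR : 'I_m -> R)
    (eps : R) (nad : 'I_m -> R) : Prop :=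
  exists nad0 : 'I_m -> R,
   ((exists ev, (forall j, E1 j = Some (ev j)) /\ good_hyp ev ymax eps /\
                forall j, intercept ev j (nad0 j)) \/
    (~ (exists ev, (forall j, E1 j = Some (ev j)) /\ good_hyp ev ymax eps) /\
     forall j, nad0 j = maxF1 j)) /\
   forall j, nad j = if nad0 j < ymin j + eps then maxR j else nad0 j.

Definition fnorm (ymin nad : 'I_m -> R) (x : bs n) : 'rV[R]_m :=
  \row_j (if nad j - ymin j == 0 then 0 else ((f x j)%:R - ymin j) / (nad j - ymin j)).

(* the selection loop (step 5) as an inductive relation:
   sel rho Ft R' Fin : starting from counters rho, chosen set Ft, available
   reference points R', the loop may terminate with chosen set Fin. *)
Section Sel.
Variables (mu N : nat) (Y Fi : {set 'I_N}) (rp : 'I_N -> refT m p) (vn : 'I_N -> 'rV[R]_m).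
Inductive sel : (refT m p -> nat) -> {set 'I_N} -> {set refT m p} -> {set 'I_N} -> Prop :=
| sel_stop (rho : refT m p -> nat) (Ft : {set 'I_N}) (Rp' : {set refT m p}) (r : refT m p) (x : 'I_N) :
    r \in Rp' -> (forall r', r' \in Rp' -> (rho r <= rho r')%N) ->
    x \in Fi :\: Ft -> rp x = r ->
    (forall x', x' \in Fi :\: Ft -> rp x' = r -> norm2 (vn x - rvec r) <= norm2 (vn x' - rvec r)) ->
    (#|Y| + #|x |: Ft|)%N = mu ->
    sel rho Ft Rp' (x |: Ft)
| sel_add (rho : refT m p -> nat) (Ft : {set 'I_N}) (Rp' : {set refT m p}) (r : refT m p) (x : 'I_N) (Fin : {set 'I_N}) :
    r \in Rp' -> (forall r', r' \in Rp' -> (rho r <= rho r')%N) ->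
    x \in Fi :\: Ft -> rp x = r ->
    (forall x', x' \in Fi :\: Ft -> rp x' = r -> norm2 (vn x - rvec r) <= norm2 (vn x' - rvec r)) ->
    (#|Y| + #|x |: Ft|)%N <> mu ->
    sel (fun r' => if r' == r then (rho r).+1 else rho r') (x |: Ft) Rp' Fin ->
    sel rho Ft Rp' Fin
| sel_remove (rho : refT m p -> nat) (Ft : {set 'I_N}) (Rp' : {set refT m p}) (r : refT m p) (Fin : {set 'I_N}) :
    r \in Rp' -> (forall r', r' \in Rp' -> (rho r <= rho r')%N) ->
    (forall x, x \in Fi :\: Ft -> rp x <> r) ->
    sel rho Ft (Rp' :\ r) Fin ->
    sel rho Ft Rp' Fin.
End Sel.

(* one generation, steps (2)-(5), given offspring Qt; ymin/ymax are the
   already-updated running extremes *)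
Definition gen_step (mu : nat) (eps : R) (assoc : 'rV[R]_m -> refT m p)
    (Pt Qt : 'I_mu -> bs n) (E0 E1 : 'I_m -> option ('I_m -> nat))
    (ymin ymax : 'I_m -> R) (Pt1 : 'I_mu -> bs n) : Prop :=
  let g := Rpop Pt Qt in
  exists istar : nat,
   (#|below f g istar| < mu <= #|below f g istar.+1|)%N /\
   let Y := below f g istar in
   let Fi := layer f g istar in
   (forall j, (exists i, i \in Y :|: Fi /\ E1 j = Some (f (g i))) \/ (exists k, E1 j = E0 k)) /\
   exists nad : 'I_m -> R,
     nad_ok E1 ymin ymax (fun j => (\max_(i in layer f g 0) f (g i) j)%:R)
                         (fun j => (\max_i f (g i) j)%:R) eps nad /\
     let vn i := fnorm ymin nad (g i) in
     let rp i := assoc (vn i) in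
     exists Ft : {set 'I_(mu + mu)},
       sel mu Y Fi rp vn (fun r => #|[set x in Y | rp x == r]|) set0 (refset m p) Ft /\
       exists sigma : 'I_mu -> 'I_(mu + mu),
         injective sigma /\ sigma @: setT = Y :|: Ft /\ forall i, Pt1 i = g (sigma i).

Definition ymin_run (mu : nat) (P Q : nat -> 'I_mu -> bs n) (t : nat) (j : 'I_m) : R :=
  (\big[minn/fmax f]_(s < t.+1) \big[minn/fmax f]_(i : 'I_(mu + mu)) f (Rpop (P s) (Q s) i) j)%:R.
Definition ymax_run (mu : nat) (P Q : nat -> 'I_mu -> bs n) (t : nat) (j : 'I_m) : R :=
  (\max_(s < t.+1) \max_(i in layer f (Rpop (P s) (Q s)) 0) f (Rpop (P s) (Q s) i) j)%:R.

(* a possible run of NSGA-III: P 0 arbitrary; Q t in the support of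
   standard bit-wise mutation (bit-flip probability 1/n); E t = E_t *)
Definition nsga3_run (mu : nat) (eps : R) (assoc : 'rV[R]_m -> refT m p)
    (P Q : nat -> 'I_mu -> bs n) (E : nat -> 'I_m -> option ('I_m -> nat)) : Prop :=
  (forall j, E 0%N j = None) /\
  forall t : nat,
    (forall i, exists (k : 'I_mu) (flips : {set 'I_n}),
        Q t i = [ffun b => P t k b (+) (b \in flips)] /\ (n = 1%N -> flips = setT)) /\
    gen_step eps assoc (P t) (Q t) (E t) (E t.+1)
             (ymin_run P Q t) (ymax_run P Q t) (P t.+1).
End Real.

From HB Require Import structures.
From mathcomp Require Import all_boot all_order all_algebra.
From mathcomp Require Import reals.
From mathcomp Require Import ring lra zify.
Set Implicit Arguments. Unset Strict Implicit. Unset Printing Implicit Defensive.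
Import Order.TTheory GRing.Theory Num.Theory.
Local Open Scope ring_scope.

(* If the critical front is not the first one, the whole first front F^1 lies in
   Y_t and survives. Otherwise Y_t is empty and all survivors are drawn from F^1.
   After normalization every objective lies in [0,1], and two points of F^1 with
   different objective vectors are 1/fmax apart in opposite directions in two
   coordinates. Since p >= 2 m^(3/2) fmax, every normalized point lies within
   1/(2 fmax) of the ray of its reference point, so such points get different
   reference points. The reference points used by F^1 therefore correspond to an
   incomparable set, so there are at most mu of them; niche-count selection takes a
   point of each of them before a second one of any, and a point sharing the
   reference point of x has the objective vector of x. *)

Lemma refset_round (R : realType) m p (q : 'I_m -> R) :
  (forall j, 0 <= q j) -> \sum_j q j = p%:R ->
  exists2 a : refT m p, a \in refset m p & forall j, (q j - (a j : nat)%:R) ^+ 2 < 1.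
Proof.
move=> q_ge0 q_sum.
(* Take for a j the increment of the integer part of the prefix sums of q:
   the increments telescope to p, and each differs from q j by less than 1. *)
pose Q k := \sum_(j < m | (j < k)%N) q j.
pose N k := Num.truncn (Q k).
have Q_ge0 k : 0 <= Q k by apply: sumr_ge0.
have Q_mono k l : (k <= l)%N -> Q k <= Q l.
  move=> kl; rewrite /Q (bigID (fun j : 'I_m => (j < k)%N) (fun j : 'I_m => (j < l)%N)) /=.
  rewrite -[X in X <= _]addr0 lerD ?sumr_ge0 // le_eqVlt; apply/orP; left.
  apply/eqP/eq_bigl => j.
  by case: (ltnP j k) => jk; rewrite ?andbT ?andbF //= (leq_trans jk kl).
have N_mono k l : (k <= l)%N -> (N k <= N l)%N by move=> kl; apply/le_truncn/Q_mono.
have Nm : N m = p.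
  by rewrite /N /Q (eq_bigl xpredT) ?q_sum ?natrK // => j; rewrite ltn_ord.
have N0 : N 0 = 0%N by rewrite /N /Q big_pred0 // truncn0.
have QS (j : 'I_m) : Q j.+1 = Q j + q j.
  rewrite /Q (bigD1 j) //= addrC; congr (_ + _); apply: eq_bigl => i.
  by rewrite ltnS -val_eqE /= ltn_neqAle andbC.
have a_lt (j : 'I_m) : (N j.+1 - N j < p.+1)%N.
  by rewrite ltnS (leq_trans (leq_subr _ _)) // -Nm N_mono.
exists [ffun j => Ordinal (a_lt j)].
  rewrite inE; apply/eqP; under eq_bigr => j _ do rewrite ffunE /=.
  by rewrite -(big_mkord xpredT (fun k => N k.+1 - N k)%N) telescope_sumn ?Nm ?N0 ?subn0.
move=> j; rewrite ffunE /= natrB ?N_mono //.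
have := truncn_itv (Q_ge0 j.+1); have := truncn_itv (Q_ge0 j).
rewrite QS /N QS -!natr1 => /andP[h1 h2] /andP[h3 h4].
nra.
Qed.

Lemma sqr_coord_le_norm2 (R : realType) m (v : 'rV[R]_m) j : v ord0 j ^+ 2 <= norm2 v.
Proof. by rewrite /norm2 (bigD1 j) //= lerDl sumr_ge0 // => i _; apply: sqr_ge0. Qed.

Lemma refset_near_ray (R : realType) m p (w : 'rV[R]_m) :
  (0 < p)%N -> (forall j, 0 <= w ord0 j) -> 0 < \sum_j w ord0 j ->
  exists2 a, a \in refset m p &
    p%:R ^+ 2 * norm2 (w - (\sum_j w ord0 j) *: rvec R a) < m%:R * (\sum_j w ord0 j) ^+ 2.
Proof.
move=> p_gt0 w_ge0; set s := \sum_j w ord0 j => s_gt0.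
have pR : 0 < p%:R :> R by rewrite ltr0n.
pose q j := p%:R * w ord0 j / s.
have q_ge0 j : 0 <= q j by rewrite /q !mulr_ge0 ?invr_ge0 ?(ltW s_gt0) ?(ltW pR).
have q_sum : \sum_j q j = p%:R by rewrite /q -mulr_suml -mulr_sumr mulfK ?gt_eqF.
have [a a_ref a_near] := refset_round q_ge0 q_sum.
exists a => //.
have m_gt0 : (0 < m)%N.
  rewrite lt0n; apply/eqP => m0; move: s_gt0; rewrite /s big1 ?ltxx // => j _.
  by have := ltn_ord j; rewrite {2}m0.
pose j0 := Ordinal m_gt0.
have scaled j : p%:R ^+ 2 * (w - s *: rvec R a) ord0 j ^+ 2 = s ^+ 2 * (q j - (a j : nat)%:R) ^+ 2.
  by rewrite !mxE /q; field; rewrite !gt_eqF.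
have -> : m%:R * s ^+ 2 = \sum_(j < m) s ^+ 2 by rewrite sumr_const card_ord mulr_natl.
rewrite /norm2 mulr_sumr.
rewrite (bigD1 j0) //= [X in _ < X](bigD1 j0) //= ltr_leD //.
  by rewrite scaled -[X in _ < X]mulr1 ltr_pM2l ?exprn_gt0.
by apply: ler_sum => j _; rewrite scaled -[X in _ <= X]mulr1 ler_wpM2l ?sqr_ge0 ?ltW.
Qed.

Lemma assoc_near_line (R : realType) m p (F : nat) (assoc : 'rV[R]_m -> refT m p) :
  assoc_ok assoc -> (0 < p)%N -> (0 < F)%N ->
  4%:R * m%:R ^+ 3 * F%:R ^+ 2 <= p%:R ^+ 2 :> R ->
  forall w : 'rV[R]_m, (forall j, 0 <= w ord0 j <= 1) -> 0 < \sum_j w ord0 j ->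
  exists l, 4%:R * F%:R ^+ 2 * norm2 (w - l *: rvec R (assoc w)) < 1.
Proof.
move=> assocP p_gt0 F_gt0 p_large w w01; set s := \sum_j w ord0 j => s_gt0.
have w_ge0 j : 0 <= w ord0 j by case/andP: (w01 j).
have [a a_ref a_near] := refset_near_ray p_gt0 w_ge0 s_gt0.
have [l l_closer] := (assocP w).2 a a_ref s.
exists l; set Y := norm2 _ in l_closer *; set X := norm2 _ in a_near l_closer.
have s_le_m : s <= m%:R.
  by rewrite -[m]card_ord -sumr_const; apply: ler_sum => j _; case/andP: (w01 j).
have c_gt0 : 0 < 4%:R * F%:R ^+ 2 :> R by rewrite mulr_gt0 ?exprn_gt0 ?ltr0n.
have pY_lt : 4%:R * F%:R ^+ 2 * (p%:R ^+ 2 * Y) < 4%:R * F%:R ^+ 2 * (m%:R * s ^+ 2).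
  by rewrite ltr_pM2l // (le_lt_trans _ a_near) // ler_wpM2l ?sqr_ge0.
have ms_le : 4%:R * F%:R ^+ 2 * (m%:R * s ^+ 2) <= p%:R ^+ 2.
  apply: le_trans p_large.
  have -> : 4%:R * m%:R ^+ 3 * F%:R ^+ 2 = 4%:R * F%:R ^+ 2 * (m%:R * m%:R ^+ 2) :> R by ring.
  apply: ler_wpM2l; first exact: ltW.
  apply: ler_wpM2l; first exact: ler0n.
  by have := ltW s_gt0; nra.
have p2_gt0 : 0 < p%:R ^+ 2 :> R by rewrite exprn_gt0 ?ltr0n.
by rewrite -(ltr_pM2l p2_gt0) mulr1 mulrCA; apply: lt_le_trans ms_le.
Qed.

Lemma near_line_coord (R : realType) m (F : R) (w r : 'rV[R]_m) l i :
  4%:R * F ^+ 2 * norm2 (w - l *: r) < 1 -> `|2%:R * F * (w ord0 i - l * r ord0 i)| < 1.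
Proof.
move=> near; have := sqr_coord_le_norm2 (w - l *: r) i; rewrite !mxE.
set e := w ord0 i - l * r ord0 i => coord_le.
have : 4%:R * F ^+ 2 * e ^+ 2 < 1.
  by apply: le_lt_trans near; apply: ler_wpM2l coord_le; rewrite mulr_ge0 ?sqr_ge0.
by move=> sqr_lt; rewrite ltr_norml; apply/andP; split; nra.
Qed.

Lemma assoc_separates (R : realType) m p (F : nat) (assoc : 'rV[R]_m -> refT m p) :
  assoc_ok assoc -> (0 < p)%N -> (0 < F)%N ->
  4%:R * m%:R ^+ 3 * F%:R ^+ 2 <= p%:R ^+ 2 :> R ->
  forall u v : 'rV[R]_m, (forall j, 0 <= u ord0 j <= 1) -> (forall j, 0 <= v ord0 j <= 1) ->
  forall j k, F%:R^-1 <= u ord0 j - v ord0 j -> F%:R^-1 <= v ord0 k - u ord0 k ->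
  assoc u != assoc v.
Proof.
move=> assocP p_gt0 F_gt0 p_large u v u01 v01 j k gap_j gap_k.
have FR : 0 < F%:R :> R by rewrite ltr0n.
have Fi : 0 < F%:R^-1 :> R by rewrite invr_gt0.
have sum_gt0 (w : 'rV[R]_m) i : (forall j, 0 <= w ord0 j <= 1) -> F%:R^-1 <= w ord0 i ->
    0 < \sum_j w ord0 j.
  move=> w01 wi; rewrite (bigD1 i) //=; apply: lt_le_trans (le_trans wi _) => //.
  by rewrite lerDl sumr_ge0 // => l _; case/andP: (w01 l).
have [lu near_u] : exists l, 4%:R * F%:R ^+ 2 * norm2 (u - l *: rvec R (assoc u)) < 1.
  apply: assoc_near_line => //; apply: (sum_gt0 _ j u01).
  by case/andP: (v01 j) => ? _; lra.
have [lv near_v] : exists l, 4%:R * F%:R ^+ 2 * norm2 (v - l *: rvec R (assoc v)) < 1.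
  apply: assoc_near_line => //; apply: (sum_gt0 _ k v01).
  by case/andP: (u01 k) => ? _; lra.
(* u and v lie within 1/(2F) of the same ray {l r : l} with r >= 0; the gap at j
   forces lu > lv, the gap at k forces lv > lu. *)
apply/eqP => same; rewrite same in near_u.
set r := rvec R (assoc v) in near_u near_v.
have r_ge0 i : 0 <= r ord0 i by rewrite mxE divr_ge0 ?ler0n.
have /ltr_normlP[uj1 uj2] := near_line_coord j near_u.
have /ltr_normlP[vj1 vj2] := near_line_coord j near_v.
have /ltr_normlP[uk1 uk2] := near_line_coord k near_u.
have /ltr_normlP[vk1 vk2] := near_line_coord k near_v.
have Fgap_j : 1 <= F%:R * (u ord0 j - v ord0 j).
  by have := ler_wpM2l (ltW FR) gap_j; rewrite mulfV ?lt0r_neq0.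
have Fgap_k : 1 <= F%:R * (v ord0 k - u ord0 k).
  by have := ler_wpM2l (ltW FR) gap_k; rewrite mulfV ?lt0r_neq0.
have pos_j : 0 < F%:R * ((lu - lv) * r ord0 j) by lra.
have pos_k : 0 < F%:R * ((lv - lu) * r ord0 k) by lra.
rewrite pmulr_rgt0 // in pos_j; rewrite pmulr_rgt0 // in pos_k.
case: (leP lu lv) => cmp.
  have : (lu - lv) * r ord0 j <= 0 by apply: mulr_le0_ge0; rewrite ?subr_le0.
  by rewrite leNgt pos_j.
have : (lv - lu) * r ord0 k <= 0 by apply: mulr_le0_ge0 => //; rewrite subr_le0 ltW.
by rewrite leNgt pos_k.
Qed.

Lemma ref_bound_sqr (R : realType) m p F : (0 < m)%N -> (0 < F)%N ->
  2 * m%:R * Num.sqrt m%:R * F%:R <= p%:R :> R ->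
  (0 < p)%N /\ 4%:R * m%:R ^+ 3 * F%:R ^+ 2 <= p%:R ^+ 2 :> R.
Proof.
move=> m_gt0 F_gt0; set b := 2 * _ * _ * _ => b_le.
have b_gt0 : 0 < b by rewrite !mulr_gt0 ?ltr0n ?sqrtr_gt0 ?ltr0n.
split; first by rewrite -(ltr0n R); apply: lt_le_trans b_le.
have -> : 4%:R * m%:R ^+ 3 * F%:R ^+ 2 = b ^+ 2.
  by rewrite /b !exprMn sqr_sqrtr ?ler0n //; ring.
by have := ltW b_gt0; nra.
Qed.

Section Normalization.
Variables (R : realType) (n m : nat) (f : bs n -> 'I_m -> nat) (ymin nad : 'I_m -> R).

Lemma fnorm_coord_01 x j :
  ymin j <= (f x j)%:R <= nad j -> 0 <= fnorm f ymin nad x ord0 j <= 1.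
Proof.
case/andP => lo hi; rewrite mxE.
have [_|ne] := eqVneq (nad j - ymin j) 0; first by rewrite lexx ler01.
have d_gt0 : 0 < nad j - ymin j by rewrite lt_def ne subr_ge0 (le_trans lo).
by rewrite divr_ge0 ?subr_ge0 ?(le_trans lo) //= ler_pdivrMr // mul1r lerB.
Qed.

Lemma fnorm_coord_gap (F : R) x y j :
  0 <= ymin j -> ymin j <= (f y j)%:R -> (f x j)%:R <= nad j -> nad j <= F ->
  (f y j < f x j)%N -> F^-1 <= fnorm f ymin nad x ord0 j - fnorm f ymin nad y ord0 j.
Proof.
move=> ymin_ge0 lo hi nadF; rewrite -(ler_nat R) -natr1 => gap.
have d_gt0 : 0 < nad j - ymin j by lra.
rewrite !mxE gt_eqF // -mulrBl opprB addrA subrK ler_pdivlMr // mulrC ler_pdivrMr; nra.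
Qed.

End Normalization.

Lemma nad_ok_bounds (R : realType) m E1 (ymin ymax maxF1 maxR : 'I_m -> R) eps nad (F : R) :
  F <= eps -> (forall j, 0 <= ymin j) -> (forall j, ymax j <= F) ->
  (forall j, maxF1 j <= F) -> (forall j, maxR j <= F) ->
  nad_ok E1 ymin ymax maxF1 maxR eps nad -> forall j, maxR j <= nad j <= F.
Proof.
move=> F_eps ymin_ge0 ymaxF maxF1F maxRF [nad0 [nad0_def nad_def]] j.
have nad0F : nad0 j <= F.
  case: nad0_def => [[ev [_ [[_ good] icpt]]] | [_ ->]] //.
  by case/andP: ((good j).2 _ (icpt j)) => _ /le_trans; apply.
rewrite nad_def; case: ltP => [_|]; first by rewrite lexx maxRF.
by have := ymin_ge0 j; have := maxRF j; lra.
Qed.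

Lemma f_le_fmax n m (f : bs n -> 'I_m -> nat) x j : (f x j <= fmax f)%N.
Proof. by apply: leq_trans (leq_bigmax x); apply: (leq_bigmax j). Qed.

Lemma fmax_gt0_dim n m (f : bs n -> 'I_m -> nat) : (0 < fmax f)%N -> (0 < m)%N.
Proof.
rewrite !lt0n; apply: contra_neq => m0; rewrite /fmax big1 // => x _.
by apply: big1 => j _; have := ltn_ord j; rewrite {2}m0.
Qed.

Lemma bigmin_le (I : finType) (a : nat) (G : I -> nat) x : (\big[minn/a]_(i : I) G i <= G x)%N.
Proof.
have : x \in index_enum I by rewrite mem_index_enum.
elim: (index_enum I) => //= y s IH; rewrite inE big_cons => /predU1P[->|xs].
  exact: geq_minl.
exact: leq_trans (geq_minr _ _) (IH xs).
Qed.

Section Run.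
Variables (R : realType) (n m mu : nat) (f : bs n -> 'I_m -> nat) (P Q : nat -> 'I_mu -> bs n).
Variable t : nat.
Local Notation g := (Rpop (P t) (Q t)).

Lemma ymin_run_le i j : ymin_run R f P Q t j <= (f (g i) j)%:R.
Proof. by rewrite ler_nat (leq_trans (bigmin_le _ _ ord_max)) ?bigmin_le. Qed.

Lemma ymax_run_le_fmax j : ymax_run R f P Q t j <= (fmax f)%:R.
Proof.
rewrite ler_nat; apply/bigmax_leqP => s _; apply/bigmax_leqP => x _; exact: f_le_fmax.
Qed.

Lemma run_objective_range E1 eps nad :
  (fmax f)%:R <= eps ->
  nad_ok E1 (ymin_run R f P Q t) (ymax_run R f P Q t)
    (fun j => (\max_(i in layer f g 0) f (g i) j)%:R) (fun j => (\max_i f (g i) j)%:R) eps nad ->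
  (forall j, nad j <= (fmax f)%:R) /\
  forall i j, ymin_run R f P Q t j <= (f (g i) j)%:R <= nad j.
Proof.
move=> fmax_eps nad_def.
have max_le_F (A : {pred 'I_(mu + mu)}) j : (\max_(x in A) f (g x) j)%:R <= (fmax f)%:R :> R.
  by rewrite ler_nat; apply/bigmax_leqP => x _; apply: f_le_fmax.
have nad_bounds := nad_ok_bounds fmax_eps (fun j => ler0n _ _) ymax_run_le_fmax
  (max_le_F _) (max_le_F _) nad_def.
split=> [j|i j]; first by case/andP: (nad_bounds j).
rewrite ymin_run_le /=; case/andP: (nad_bounds j) => max_le _.
by apply: le_trans max_le; rewrite ler_nat; apply: (leq_bigmax_cond i).
Qed.

End Run.

Section Sorting.
Variables (n m : nat) (f : bs n -> 'I_m -> nat) (N : nat) (g : 'I_N -> bs n).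

Lemma front_sub_below k : layer f g 0 \subset below f g k.+1.
Proof.
have rem_sub1 : remaining f g k.+1 \subset remaining f g 1.
  by elim: k => [|k IH] //; apply: subset_trans IH; apply: subsetDl.
apply/subsetP => x x_front; rewrite in_setC; apply: contraL x_front.
by move=> /(subsetP rem_sub1) /setDP[].
Qed.

Lemma front_wdom_eq x y :
  x \in layer f g 0 -> wdom f (g y) (g x) -> forall j, f (g y) j = f (g x) j.
Proof.
rewrite inE => /andP[_ /forallP/(_ y)]; rewrite in_setT /= /sdom => non_dom y_dom j.
apply/eqP; rewrite eqn_leq (forallP y_dom j) andbT leqNgt.
by apply: contra non_dom => lt; rewrite y_dom; apply/existsP; exists j.
Qed.

Lemma front_gap x y :
  x \in layer f g 0 -> ~~ [forall j, f (g y) j == f (g x) j] ->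
  exists j, (f (g y) j < f (g x) j)%N.
Proof.
move=> x_front ne; have : ~~ wdom f (g y) (g x).
  by apply: contra ne => /(front_wdom_eq x_front) same; apply/forallP => j; rewrite same.
by rewrite negb_forall => /existsP[j]; rewrite -ltnNge; exists j.
Qed.

Lemma card_front_image_le (U : finType) (h : 'I_N -> U) (S : {set bs n}) :
  (forall S', incomparable_set f S' -> (#|S'| <= #|S|)%N) ->
  (forall x y, (forall j, f (g x) j = f (g y) j) -> h x = h y) ->
  (#|h @: layer f g 0| <= #|S|)%N.
Proof.
move=> S_max h_f; set D := h @: layer f g 0.
pose rep r := odflt [ffun=> false] [pick b in g @: [set x in layer f g 0 | h x == r]].
have repP r : r \in D -> exists2 x, x \in layer f g 0 & h x = r /\ rep r = g x.
  case/imsetP => x0 x0F ->; rewrite /rep; case: pickP => [b /imsetP[x] | none].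
    by rewrite inE => /andP[xF /eqP hx] ->; exists x.
  by have := none (g x0); rewrite imset_f // inE x0F eqxx.
have rep_inj : {in D &, injective rep}.
  move=> r1 r2 /repP[x1 _ [<- ->]] /repP[x2 _ [<- ->]] e.
  by apply: h_f => j; rewrite e.
rewrite -(card_in_imset rep_inj); apply: S_max => b1 b2.
move=> /imsetP[r1 /repP[x1 x1F [hx1 rep1]] ->] /imsetP[r2 /repP[x2 x2F [hx2 rep2]] ->] ne.
have f_ne : ~ forall j, f (g x1) j = f (g x2) j.
  by move=> same; move: ne; rewrite -hx1 -hx2 (h_f _ _ same) eqxx.
rewrite rep1 rep2.
by split; apply/negP => /front_wdom_eq dom; apply: f_ne => j; rewrite dom.
Qed.

End Sorting.

Lemma front_assoc_eq (R : realType) n m p (f : bs n -> 'I_m -> nat) N (g : 'I_N -> bs n)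
    (assoc : 'rV[R]_m -> refT m p) (ymin nad : 'I_m -> R) (F : nat) :
  assoc_ok assoc -> (0 < p)%N -> (0 < F)%N ->
  4%:R * m%:R ^+ 3 * F%:R ^+ 2 <= p%:R ^+ 2 :> R ->
  (forall j, 0 <= ymin j) -> (forall j, nad j <= F%:R) ->
  (forall x j, ymin j <= (f (g x) j)%:R <= nad j) ->
  forall x y, x \in layer f g 0 -> y \in layer f g 0 ->
  assoc (fnorm f ymin nad (g x)) = assoc (fnorm f ymin nad (g y)) ->
  forall j, f (g x) j = f (g y) j.
Proof.
move=> assocP p_gt0 F_gt0 p_large ymin_ge0 nadF f_range x y x_front y_front same.
move=> j0; have [/forallP eq_f|ne] := boolP [forall j, f (g x) j == f (g y) j].
  exact/eqP/eq_f.
have ne' : ~~ [forall j, f (g y) j == f (g x) j].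
  by apply: contra ne => /forallP eq_f; apply/forallP => j; rewrite eq_sym.
have [j gap_j] := front_gap x_front ne'.
have [k gap_k] := front_gap y_front ne.
have in01 z i : 0 <= fnorm f ymin nad (g z) ord0 i <= 1 by apply: fnorm_coord_01.
have coord_gap z z' i : (f (g z') i < f (g z) i)%N ->
    F%:R^-1 <= fnorm f ymin nad (g z) ord0 i - fnorm f ymin nad (g z') ord0 i.
  by have /andP[lo _] := f_range z' i; have /andP[_ hi] := f_range z i; apply: fnorm_coord_gap.
have := assoc_separates assocP p_gt0 F_gt0 p_large (in01 x) (in01 y)
  (coord_gap _ _ _ gap_j) (coord_gap _ _ _ gap_k).
by rewrite same eqxx.
Qed.

Section Selection.
Variables (R : realType) (m p mu N : nat) (Y Fi : {set 'I_N}) (rp : 'I_N -> refT m p)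
  (vn : 'I_N -> 'rV[R]_m).

Lemma sel_subset rho Ft Rp Fin : sel mu Y Fi rp vn rho Ft Rp Fin -> Ft \subset Fin.
Proof.
elim=> {rho Ft Rp Fin} [*|rho Ft Rp r x Fin _ _ _ _ _ _ _ IH|//]; first exact: subsetUr.
exact: subset_trans (subsetUr _ _) IH.
Qed.

Lemma sel_sub_front rho Ft Rp Fin :
  sel mu Y Fi rp vn rho Ft Rp Fin -> Ft \subset Fi -> Fin \subset Fi.
Proof.
elim=> {rho Ft Rp Fin} [rho Ft Rp r x _ _ xF _ _ _ | rho Ft Rp r x Fin _ _ xF _ _ _ _ IH | //] sF.
  by case/setDP: xF => xF _; rewrite subUset sub1set xF.
by apply: IH; case/setDP: xF => xF _; rewrite subUset sub1set xF.
Qed.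

(* An unused reference point d of the front has niche count 0, so a point of
   minimal niche count is unused as well. *)
Lemma sel_min_unused (rho : refT m p -> nat) (Ft : {set 'I_N}) (Rp : {set refT m p}) r d :
  r \in Rp -> (forall r', r' \in Rp -> (rho r <= rho r')%N) ->
  (forall r, rho r = #|[set y in Ft | rp y == r]|) ->
  (forall r, r \in rp @: Fi -> r \notin Rp -> r \in rp @: Ft) ->
  d \in rp @: Fi -> d \notin rp @: Ft -> r \notin rp @: Ft.
Proof.
move=> rR r_min rho_def covered dD dF.
have dR : d \in Rp by apply: contraT => dR; move: dF; rewrite covered.
have := r_min d dR; rewrite !rho_def.
have -> : [set y in Ft | rp y == d] = set0.
  apply/setP => y; rewrite !inE; apply/negP => /andP[yF /eqP yd].
  by move: dF; rewrite -yd imset_f.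
rewrite cards0 leqn0 cards_eq0 => /eqP r_unused; apply/imsetP => [[y yF ry]].
have : y \in [set y in Ft | rp y == r] by rewrite inE yF ry eqxx.
by rewrite r_unused inE.
Qed.

Lemma sel_distinct rho Ft Rp Fin : sel mu Y Fi rp vn rho Ft Rp Fin ->
  (forall r, rho r = #|[set x in Ft | rp x == r]|) -> Ft \subset Fi ->
  (forall r, r \in rp @: Fi -> r \notin Rp -> r \in rp @: Ft) ->
  {in Ft &, injective rp} ->
  forall d, d \in rp @: Fi -> d \notin rp @: Fin ->
  [/\ Fin \subset Fi, {in Fin &, injective rp} & (#|Y| + #|Fin|)%N = mu].
Proof.
have inj_U1 x (A : {set 'I_N}) :
    rp x \notin rp @: A -> {in A &, injective rp} -> {in x |: A &, injective rp}.
  move=> fresh inj y z; rewrite !inE => /predU1P[->|yA] /predU1P[->|zA] //.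
  - by move=> e; move: fresh; rewrite e imset_f.
  - by move=> e; move: fresh; rewrite -e imset_f.
  - exact: inj.
move=> H; have := sel_subset H; elim: H => {rho Ft Rp Fin}.
- move=> rho Ft Rp r x rR r_min xF rx _ card _ rho_def sF covered inj d dD dF.
  have dF' : d \notin rp @: Ft by apply: contra dF; apply/subsetP/imsetS/subsetUr.
  have fresh := sel_min_unused rR r_min rho_def covered dD dF'.
  case/setDP: xF => xFi _; split => //; first by rewrite subUset sub1set xFi.
  by apply: inj_U1; rewrite ?rx.
- move=> rho Ft Rp r x Fin rR r_min xF rx _ _ Hs IH sub rho_def sF covered inj d dD dF.
  have dF' : d \notin rp @: Ft by apply: contra dF; apply/subsetP/imsetS.
  have fresh := sel_min_unused rR r_min rho_def covered dD dF'.
  case/setDP: xF => xFi xFt.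
  apply: (IH (sel_subset Hs)) dD dF.
  + move=> r'; rewrite rho_def; case: eqP => [->|ne].
      rewrite (_ : [set y in x |: Ft | rp y == r] = x |: [set y in Ft | rp y == r]).
        by rewrite cardsU1 inE (negbTE xFt).
      by apply/setP => y; rewrite !inE; case: eqP => [->|] //=; rewrite rx eqxx.
    rewrite rho_def; apply: eq_card => y; rewrite !inE; case: (eqVneq y x) => [->|] //=.
    by rewrite rx (negbTE xFt); case: eqP => // e; case: ne.
  + by rewrite subUset sub1set xFi.
  + by move=> r' r'D r'R; apply/(subsetP (imsetS rp (subsetUr [set x] Ft)))/covered.
  + by apply: inj_U1; rewrite ?rx.
- move=> rho Ft Rp r Fin rR r_min no_x Hs IH sub rho_def sF covered inj d dD dF.
  apply: (IH sub rho_def sF _ inj d dD dF) => r' r'D.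
  rewrite !inE negb_and negbK => /orP[/eqP er|r'R]; last exact: covered.
  case/imsetP: r'D => y yFi ey.
  have [yFt|yFt] := boolP (y \in Ft); first by rewrite ey imset_f.
  by case: (no_x y); rewrite ?inE ?yFt ?yFi // -ey.
Qed.

End Selection.

Lemma sel_covers (R : realType) m p mu N (Fi : {set 'I_N}) (rp : 'I_N -> refT m p)
    (vn : 'I_N -> 'rV[R]_m) Fin :
  sel mu set0 Fi rp vn (fun r => #|[set x in set0 | rp x == r]|) set0 (refset m p) Fin ->
  rp @: Fi \subset refset m p -> (#|rp @: Fi| <= mu)%N -> rp @: Fi \subset rp @: Fin.
Proof.
move=> H D_ref D_mu; apply/subsetP => d dD; apply: contraT => dF.
have covered r : r \in rp @: Fi -> r \notin refset m p -> r \in rp @: set0.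
  by move=> /(subsetP D_ref) ->.
have inj0 : {in set0 &, injective rp} by move=> x y; rewrite inE.
have [FinFi inj card] := sel_distinct H (fun r => erefl) (sub0set _) covered inj0 dD dF.
have : rp @: Fin \subset rp @: Fi :\ d.
  apply/subsetP => r /imsetP[x xFin ->]; rewrite !inE imset_f ?(subsetP FinFi) // andbT.
  by apply: contra dF => /eqP <-; apply: imset_f.
move/subset_leq_card; rewrite (card_in_imset inj); move: (cardsD1 d (rp @: Fi)).
by rewrite dD; rewrite cards0 in card; lia.
Qed.

Theorem lemma4 (R : realType) (n m mu p : nat) (f : bs n -> 'I_m -> nat) (eps : R)
    (assoc : 'rV[R]_m -> refT m p)
    (P Q : nat -> 'I_mu -> bs n) (E : nat -> 'I_m -> option ('I_m -> nat)) :
  (1 <= fmax f)%N ->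
  (fmax f)%:R <= eps ->
  2 * m%:R * Num.sqrt (m%:R) * (fmax f)%:R <= p%:R :> R ->
  (exists S : {set bs n}, incomparable_set f S /\
     (forall S' : {set bs n}, incomparable_set f S' -> (#|S'| <= #|S|)%N) /\
     (#|S| <= mu)%N) ->
  assoc_ok assoc ->
  nsga3_run f eps assoc P Q E ->
  forall (t : nat) (i : 'I_(mu + mu)),
    i \in layer f (Rpop (P t) (Q t)) 0 ->
    exists k : 'I_mu, forall j : 'I_m, f (P t.+1 k) j = f (Rpop (P t) (Q t) i) j.
Proof.
move=> fmax_ge1 fmax_eps p_large [S [_ [S_max S_mu]]] assocP [_ run] t i i_front.
have [_ [istar [_ [_ [nad [nad_def [Ft [sel_run [sigma [_ [sigma_im Pt1]]]]]]]]]]] := run t.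
set g := Rpop (P t) (Q t) in i_front nad_def sel_run sigma_im Pt1 *.
have survives x : x \in below f g istar :|: Ft -> exists k, forall j, f (P t.+1 k) j = f (g x) j.
  by rewrite -sigma_im => /imsetP[k _ ->]; exists k => j; rewrite Pt1.
case: istar sel_run survives sigma_im => [|k] sel_run survives _; last first.
  by apply: survives; rewrite inE (subsetP (front_sub_below _ _ k) _ i_front).
rewrite [below f g 0](_ : _ = set0) ?set0U in sel_run survives; last by rewrite /below setCT.
set ymin := ymin_run R f P Q t in nad_def sel_run.
set rp := fun x => assoc (fnorm f ymin nad (g x)) in sel_run.
have [p_gt0 p_large2] := ref_bound_sqr (fmax_gt0_dim fmax_ge1) fmax_ge1 p_large.
have [nad_le_F f_range] := run_objective_range fmax_eps nad_def.
have ymin_ge0 j : 0 <= ymin j by apply: ler0n.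
have same_f := front_assoc_eq assocP p_gt0 fmax_ge1 p_large2 ymin_ge0 nad_le_F f_range.
have D_mu : (#|rp @: layer f g 0| <= mu)%N.
  apply: leq_trans S_mu; apply: card_front_image_le S_max _ => x y eq_f.
  by rewrite /rp; congr assoc; apply/rowP => j; rewrite !mxE eq_f.
have /subsetP covers : rp @: layer f g 0 \subset rp @: Ft.
  apply: sel_covers sel_run _ D_mu.
  by apply/subsetP => r /imsetP[x _ ->]; apply: (assocP _).1.
have /imsetP[x x_Ft rp_x] := covers _ (imset_f rp i_front).
have [k k_eq] := survives x x_Ft.
exists k => j; rewrite k_eq; apply: same_f => //.
exact: subsetP (sel_sub_front sel_run (sub0set _)) _ x_Ft.
Qed.
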